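(* Let $1\le r\le m$ and assume $\lambda_r>0$ and $\widehat\lambda_r>0$. Then $$\|\widehat K_r-K_r\|_F\le\sqrt{\lambda_1N}\,\|\Delta H\|_2\le N\|\Delta H\|_2.$$
   Context: Let $\mathcal X$ be a set and $\kappa:\mathcal X\times\mathcal X\to\mathbb R$ a positive semidefinite kernel with $\kappa(\mathbf x,\mathbf x)\le 1$ for all $\mathbf x$. Let $\mathcal H_\kappa$ be its RKHS, with inner product $\langle\cdot,\cdot\rangle$. Let $\mathcal D=\{\mathbf x_1,\ldots,\mathbf x_N\}\subset\mathcal X$ and $K=[\kappa(\mathbf x_i,\mathbf x_j)]_{N\times N}$. Assume $K$ is positive definite, with eigenvalues $\lambda_1\ge\cdots\ge\lambda_N>0$ and orthonormal eigenvectors $\mathbf v_i$. Put $V_{i,j}=[(\mathbf v_1,\ldots,\mathbf v_N)]_{i,j}$ and $K_r=\sum_{i=1}^r\lambda_i\mathbf v_i\mathbf v_i^\top$. Let $\widehat{\mathbf x}_1,\ldots,\widehat{\mathbf x}_m$ be points sampled uniformly from $\mathcal D$. Let $\widehat K=[\kappa(\widehat{\mathbf x}_i,\widehat{\mathbf x}_j)]_{m\times m}$, with eigenvalues $\widehat\lambda_1\ge\cdots\ge\widehat\lambda_m$ and orthonormal eigenvectors $\mathbf u_i$. Put $U_{i,j}=[(\mathbf u_1,\ldots,\mathbf u_r)]_{i,j}$. Define $$\widehat W=\sum_{i=1}^r\widehat\lambda_i^{-1}\mathbf u_i\mathbf u_i^\top,\qquad K_b=[\kappa(\mathbf x_i,\widehat{\mathbf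 x}_j)]_{N\times m},\qquad \widehat K_r=K_b\widehat WK_b^\top.$$ Define $$\varphi_j=\lambda_j^{-1/2}\sum_{i=1}^N V_{i,j}\kappa(\mathbf x_i,\cdot)\quad(j\in[N]),\qquad \widehat\varphi_j=\widehat\lambda_j^{-1/2}\sum_{i=1}^m U_{i,j}\kappa(\widehat{\mathbf x}_i,\cdot)\quad(j\le r).$$ Define $H_r[f]=\sum_{i=1}^r\varphi_i\langle\varphi_i,f\rangle$, $\widehat H_r[f]=\sum_{i=1}^r\widehat\varphi_i\langle\widehat\varphi_i,f\rangle$, and $\Delta H=H_r-\widehat H_r$. Here $\|\cdot\|_2$ denotes the operator (spectral) norm on $\mathcal H_\kappa$, and $\|\cdot\|_F$ the Frobenius norm. *)

From HB Require Import structures.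
From mathcomp Require Import all_boot all_order all_algebra.
Set Implicit Arguments. Unset Strict Implicit. Unset Printing Implicit Defensive.
Import Order.TTheory GRing.Theory Num.Theory.
Local Open Scope ring_scope.

Section Defs.
Variable R : rcfType.

Definition psd_kernel (X : Type) (kappa : X -> X -> R) : Prop :=
  (forall x y, kappa x y = kappa y x) /\
  (forall (n : nat) (xs : 'I_n -> X) (c : 'I_n -> R),
      0 <= \sum_(i < n) \sum_(j < n) c i * c j * kappa (xs i) (xs j)).

Definition inner_product (V : lmodType R) (ip : V -> V -> R) : Prop :=
  [/\ forall u v, ip u v = ip v u,
      forall a u v w, ip (a *: u + v) w = a * ip u w + ip v w,
      forall u, 0 <= ip u u
    & forall u, ip u u = 0 -> u = 0].

Definition ipnorm (V : lmodType R) (ip : V -> V -> R) (f : V) : R :=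
  Num.sqrt (ip f f).

(* Feature space of kappa with feature map Phi x = kappa(x, .):
   reproducing property <kappa(x,.), kappa(y,.)> = kappa(x,y). *)
Definition feature_map (X : Type) (kappa : X -> X -> R) (V : lmodType R)
  (ip : V -> V -> R) (Phi : X -> V) : Prop :=
  forall x y, ip (Phi x) (Phi y) = kappa x y.

Definition is_op_norm (V : lmodType R) (ip : V -> V -> R) (T : V -> V) (c : R)
  : Prop :=
  (forall f, ipnorm ip f <= 1 -> ipnorm ip (T f) <= c) /\
  (forall b, (forall f, ipnorm ip f <= 1 -> ipnorm ip (T f) <= b) -> c <= b).

Definition frob_norm (p q : nat) (A : 'M[R]_(p, q)) : R :=
  Num.sqrt (\sum_(i < p) \sum_(j < q) A i j ^+ 2).

Definition gram (X : Type) (kappa : X -> X -> R) (p q : nat)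
  (y : 'I_p -> X) (z : 'I_q -> X) : 'M[R]_(p, q) :=
  \matrix_(i, j) kappa (y i) (z j).

Definition sorted_eigendecomp (n : nat) (A : 'M[R]_n) (lam : nat -> R)
  (E : 'M[R]_n) : Prop :=
  [/\ E^T *m E = 1%:M,
      A *m E = E *m diag_mx (\row_(i < n) lam i)
    & forall i j : nat, (i <= j < n)%N -> lam j <= lam i].

Definition trunc_mx (n r : nat) (lam : nat -> R) (E : 'M[R]_n) : 'M[R]_n :=
  \sum_(i < n | (i < r)%N) lam i *: (col i E *m (col i E)^T).

Definition pinv_trunc (n r : nat) (lam : nat -> R) (E : 'M[R]_n) : 'M[R]_n :=
  \sum_(i < n | (i < r)%N) (lam i)^-1 *: (col i E *m (col i E)^T).

Definition eigfun (V : lmodType R) (X : Type) (Phi : X -> V) (n : nat)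
  (y : 'I_n -> X) (lam : nat -> R) (E : 'M[R]_n) (j : 'I_n) : V :=
  (Num.sqrt (lam j))^-1 *: \sum_(i < n) E i j *: Phi (y i).

Definition proj_op (V : lmodType R) (ip : V -> V -> R) (n r : nat)
  (phi : 'I_n -> V) (f : V) : V :=
  \sum_(i < n | (i < r)%N) ip (phi i) f *: phi i.

End Defs.

(* Write H_r and H^_r for the rank-r spectral projections on the feature space
   and DH = H_r - H^_r, whose operator norm is c.  The proof rests on three facts.
   1. Both kernel matrices are Gram matrices of the feature vectors Phi x_i
      under the projections: (K_r)_{ij} = <Phi x_i, H_r Phi x_j> and
      (K^_r)_{ij} = <Phi x_i, H^_r Phi x_j>.  Hence the entries of K^_r - K_r
      are -<Phi x_i, DH (Phi x_j)>.
   2. A Bessel-type inequality: sum_i <Phi x_i, g>^2 <= lam_1 ||g||^2, from the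
      Rayleigh bound on the Gram matrix K and Cauchy-Schwarz.
   3. Since kappa(x, x) <= 1, ||Phi x_j|| <= 1, so ||DH (Phi x_j)|| <= c, and
      lam_1 <= tr K <= N.
   Summing 2 over the N columns, with g = DH (Phi x_j), gives
   ||K^_r - K_r||_F^2 <= lam_1 N c^2.
   The file develops, in order: inner-product calculus and Cauchy-Schwarz,
   spectral facts about a sorted eigendecomposition, entries of rank-one
   sums, the feature-space identities 1 and 2, and finally the theorem. *)

From HB Require Import structures.
From mathcomp Require Import all_boot all_order all_algebra.
From mathcomp Require Import ring.
Import Order.TTheory GRing.Theory Num.Theory.
Local Open Scope ring_scope.
Set Implicit Arguments. Unset Strict Implicit.

Section InnerProduct.
Variables (R : rcfType) (V : lmodType R) (ip : V -> V -> R).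
Hypothesis Hip : inner_product ip.

Lemma ipC u v : ip u v = ip v u.
Proof. by case: Hip. Qed.

Lemma ip_linear a u v w : ip (a *: u + v) w = a * ip u w + ip v w.
Proof. by case: Hip. Qed.

Lemma ip_ge0 u : 0 <= ip u u.
Proof. by case: Hip. Qed.

Lemma ip_eq0 u : ip u u = 0 -> u = 0.
Proof. by case: Hip => _ _ _; apply. Qed.

Lemma ipDl u v w : ip (u + v) w = ip u w + ip v w.
Proof. by have := ip_linear 1 u v w; rewrite scale1r mul1r. Qed.

Lemma ip0l w : ip 0 w = 0.
Proof. by apply: (addrI (ip 0 w)); rewrite -ipDl !addr0. Qed.

Lemma ipZl a u w : ip (a *: u) w = a * ip u w.
Proof. by rewrite -[a *: u]addr0 ip_linear ip0l addr0. Qed.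

Lemma ipBl u v w : ip (u - v) w = ip u w - ip v w.
Proof. by rewrite ipDl -scaleN1r ipZl mulN1r. Qed.

Lemma ip_suml (I : Type) (s : seq I) (P : pred I) (F : I -> V) w :
  ip (\sum_(i <- s | P i) F i) w = \sum_(i <- s | P i) ip (F i) w.
Proof. by elim/big_rec2: _ => [|i y1 y2 _ <-]; rewrite ?ip0l ?ipDl. Qed.

Lemma ipZr a u w : ip w (a *: u) = a * ip w u.
Proof. by rewrite !(ipC w) ipZl. Qed.

Lemma ipBr u v w : ip w (u - v) = ip w u - ip w v.
Proof. by rewrite !(ipC w) ipBl. Qed.

Lemma ip_sumr (I : Type) (s : seq I) (P : pred I) (F : I -> V) w :
  ip w (\sum_(i <- s | P i) F i) = \sum_(i <- s | P i) ip w (F i).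
Proof. by rewrite ipC ip_suml; apply: eq_bigr => i _; rewrite ipC. Qed.

(* Cauchy-Schwarz, from the positivity of ip (<v,v> u - <u,v> v). *)
Lemma cauchy_schwarz u v : ip u v ^+ 2 <= ip u u * ip v v.
Proof.
have [vv0|vv_neq0] := eqVneq (ip v v) 0.
  by rewrite (ip_eq0 vv0) (ipC u 0) !ip0l mulr0 expr2 mulr0.
have vv_gt0 : 0 < ip v v by rewrite lt0r vv_neq0 ip_ge0.
have := ip_ge0 (ip v v *: u - ip u v *: v).
rewrite !(ipBl, ipBr, ipZl, ipZr) (ipC v u).
have -> : ip v v * (ip v v * ip u u) - ip v v * (ip u v * ip u v)
          - (ip u v * (ip v v * ip u v) - ip u v * (ip u v * ip v v))
        = ip v v * (ip u u * ip v v - ip u v ^+ 2) by ring.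
by rewrite pmulr_rge0 // subr_ge0.
Qed.

Lemma op_norm_ge0 (T : V -> V) c : is_op_norm ip T c -> 0 <= c.
Proof.
case=> bound _; apply: le_trans (bound 0 _); first exact: sqrtr_ge0.
by rewrite /ipnorm ip0l sqrtr0 ler01.
Qed.

Lemma op_norm_sq_bound (T : V -> V) c f :
  is_op_norm ip T c -> ip f f <= 1 -> ip (T f) (T f) <= c ^+ 2.
Proof.
move=> Tc f1; have c0 := op_norm_ge0 Tc; case: Tc => bound _.
have /bound : ipnorm ip f <= 1 by rewrite /ipnorm -sqrtr1 ler_wsqrtr.
rewrite /ipnorm => Tf_le_c.
by rewrite -(sqr_sqrtr (ip_ge0 (T f))) lerXn2r // ?nnegrE ?sqrtr_ge0.
Qed.

End InnerProduct.

Section Spectral.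
Variables (R : rcfType) (n : nat) (A E : 'M[R]_n) (lam : nat -> R).
Hypothesis HE : sorted_eigendecomp A lam E.

Let D := diag_mx (\row_(i < n) lam i).

Lemma spectral_factorization : A = E *m D *m E^T.
Proof.
case: HE => EtE AE _.
by rewrite /D -AE -mulmxA (mulmx1C EtE) mulmx1.
Qed.

Lemma eigen_column (a k : 'I_n) : \sum_l A a l * E l k = lam k * E a k.
Proof.
case: HE => _ AE _.
have := congr1 (fun M : 'M[R]_n => M a k) AE.
by rewrite mul_mx_diag !mxE mulrC => <-.
Qed.

Lemma quad_form_le_top_eig (a : 'I_n -> R) :
  \sum_i \sum_j a i * a j * A i j <= lam 0%N * \sum_i a i ^+ 2.
Proof.
case: HE => EtE _ sorted.
pose av := \col_i a i; pose b := E^T *m av.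
have quad : \sum_i \sum_j a i * a j * A i j = (av^T *m A *m av) 0 0.
  rewrite mxE exchange_big; apply: eq_bigr => j _.
  rewrite !mxE mulr_suml; apply: eq_bigr => i _; rewrite !mxE; ring.
have diag_form : av^T *m A *m av = b^T *m D *m b.
  by rewrite spectral_factorization /b trmx_mul trmxK !mulmxA.
have norm : \sum_i a i ^+ 2 = (b^T *m b) 0 0.
  rewrite /b trmx_mul trmxK mulmxA -(mulmxA _ E) (mulmx1C EtE) mulmx1 mxE.
  by apply: eq_bigr => i _; rewrite !mxE expr2.
rewrite quad diag_form norm mul_mx_diag !mxE mulr_sumr; apply: ler_sum => k _.
rewrite !mxE -mulrA mulrCA; apply: ler_wpM2r; first by rewrite -expr2 sqr_ge0.
by apply: sorted; rewrite leq0n ltn_ord.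
Qed.

Lemma trace_eq_sum_eig : \tr A = \sum_(k < n) lam k.
Proof.
case: HE => EtE _ _.
rewrite spectral_factorization mxtrace_mulC mulmxA EtE mul1mx mxtrace_diag.
by apply: eq_bigr => k _; rewrite mxE.
Qed.

Lemma top_eig_le_dim : (0 < n)%N ->
  (forall k : 'I_n, 0 <= lam k) -> (forall i, A i i <= 1) -> lam 0%N <= n%:R.
Proof.
move=> n_gt0 lam_ge0 diag_le1.
have tr_le : \tr A <= n%:R.
  by rewrite /mxtrace -[n in n%:R]card_ord -sumr_const; apply: ler_sum.
apply: le_trans tr_le; rewrite trace_eq_sum_eig (bigD1 (Ordinal n_gt0)) //=.
by rewrite lerDl sumr_ge0.
Qed.

Lemma leading_eig_gt0 r : (r <= n)%N -> 0 < lam r.-1 ->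
  forall k : 'I_n, (k < r)%N -> 0 < lam k.
Proof.
case: HE => _ _ sorted r_le lam_r k k_lt_r; apply: lt_le_trans lam_r _.
by apply: sorted; rewrite -ltnS prednK ?(leq_ltn_trans _ k_lt_r) // k_lt_r.
Qed.

End Spectral.

Section MatrixEntries.
Variable R : rcfType.

Lemma sandwich_entry p q (A : 'M[R]_(p, q)) (B : 'M[R]_q) (a : nat -> R) r i j :
  (A *m (\sum_(k < q | (k < r)%N) a k *: (col k B *m (col k B)^T)) *m A^T) i j =
  \sum_(k < q | (k < r)%N) a k * ((\sum_l A i l * B l k) * (\sum_l A j l * B l k)).
Proof.
rewrite mulmx_sumr mulmx_suml summxE; apply: eq_bigr => k _.
rewrite -scalemxAr -scalemxAl mxE; congr (_ * _).
rewrite !mulmxA -[_ *m A^T]mulmxA -trmx_mul mxE big_ord1 !mxE.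
by congr (_ * _); apply: eq_bigr => l _; rewrite !mxE.
Qed.

Lemma trunc_mx_entry n (lam : nat -> R) (E : 'M[R]_n) r i j :
  trunc_mx r lam E i j = \sum_(k < n | (k < r)%N) lam k * (E i k * E j k).
Proof.
rewrite /trunc_mx summxE; apply: eq_bigr => k _.
by rewrite mxE mxE big_ord1 !mxE.
Qed.

Lemma frob_norm_le p q (M : 'M[R]_(p, q)) a c : 0 <= a -> 0 <= c ->
  \sum_i \sum_j M i j ^+ 2 <= a * c ^+ 2 -> frob_norm M <= Num.sqrt a * c.
Proof.
move=> a_ge0 c_ge0 /ler_wsqrtr; rewrite /frob_norm sqrtrM //.
by rewrite sqrtr_sqr ger0_norm.
Qed.

End MatrixEntries.

Section FeatureSpace.
Variables (R : rcfType) (X : Type) (kappa : X -> X -> R)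
  (V : lmodType R) (ip : V -> V -> R) (Phi : X -> V).
Hypothesis Hip : inner_product ip.
Hypothesis HPhi : feature_map kappa ip Phi.

Lemma kappaC a b : kappa a b = kappa b a.
Proof. by rewrite -!HPhi ipC. Qed.

Lemma eigfun_ip n (y : 'I_n -> X) (mu : nat -> R) (E : 'M[R]_n) j z :
  ip (eigfun Phi y mu E j) (Phi z) =
  (Num.sqrt (mu j))^-1 * \sum_i E i j * kappa (y i) z.
Proof.
rewrite /eigfun ipZl // ip_suml //; congr (_ * _).
by apply: eq_bigr => i _; rewrite ipZl // HPhi.
Qed.

Lemma proj_op_ip n (y : 'I_n -> X) (mu : nat -> R) (E : 'M[R]_n) r z w :
  (forall k : 'I_n, (k < r)%N -> 0 <= mu k) ->
  ip (Phi z) (proj_op ip r (eigfun Phi y mu E) (Phi w)) =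
  \sum_(k < n | (k < r)%N) (mu k)^-1 *
     ((\sum_i E i k * kappa (y i) z) * (\sum_i E i k * kappa (y i) w)).
Proof.
move=> mu_ge0; rewrite /proj_op ip_sumr //; apply: eq_bigr => k k_lt_r.
rewrite ipZr // (ipC Hip (Phi z)) !eigfun_ip.
rewrite -[in RHS](sqr_sqrtr (mu_ge0 k k_lt_r)) expr2 invfM.
by set a := (Num.sqrt _)^-1; set A := \sum_i _; set B := \sum_i _; ring.
Qed.

Lemma nystrom_entry n m (x : 'I_n -> X) (y : 'I_m -> X) (mu : nat -> R)
    (E : 'M[R]_m) r i j :
  (forall k : 'I_m, (k < r)%N -> 0 < mu k) ->
  (gram kappa x y *m pinv_trunc r mu E *m (gram kappa x y)^T) i j =
  ip (Phi (x i)) (proj_op ip r (eigfun Phi y mu E) (Phi (x j))).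
Proof.
move=> mu_gt0; rewrite /pinv_trunc (sandwich_entry _ _ (fun k => (mu k)^-1)) proj_op_ip; last first.
  by move=> k /mu_gt0 /ltW.
by apply: eq_bigr => k _; congr (_ * (_ * _));
  apply: eq_bigr => l _; rewrite mxE mulrC kappaC.
Qed.

(* Truncated entries: (K_r)_{ij} = <Phi x_i, H_r (Phi x_j)>, because
   <phi_k, Phi x_i> = sqrt(lam_k) V_{ik} for the eigenfunctions phi_k. *)
Lemma trunc_entry n (x : 'I_n -> X) (lam : nat -> R) (E : 'M[R]_n) r i j :
  sorted_eigendecomp (gram kappa x x) lam E ->
  (forall k : 'I_n, (k < r)%N -> 0 < lam k) ->
  trunc_mx r lam E i j =
  ip (Phi (x i)) (proj_op ip r (eigfun Phi x lam E) (Phi (x j))).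
Proof.
move=> HE lam_gt0.
have eig a (k : 'I_n) : \sum_l E l k * kappa (x l) (x a) = lam k * E a k.
  rewrite -(eigen_column HE); apply: eq_bigr => l _.
  by rewrite mxE mulrC kappaC.
rewrite trunc_mx_entry proj_op_ip; last by move=> k /lam_gt0 /ltW.
apply: eq_bigr => k k_lt_r; rewrite !eig.
by have := lam_gt0 k k_lt_r; rewrite lt0r => /andP[lam_neq0 _]; field.
Qed.

(* With
   w = sum_i <Phi x_i, g> Phi x_i, one has <w, g> = S (the sum), and
   <w, w> <= lam_1 S by the Rayleigh bound; conclude by Cauchy-Schwarz. *)
Lemma feature_bessel n (x : 'I_n -> X) (lam : nat -> R) (E : 'M[R]_n) g :
  sorted_eigendecomp (gram kappa x x) lam E -> 0 <= lam 0%N ->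
  \sum_i ip (Phi (x i)) g ^+ 2 <= lam 0%N * ip g g.
Proof.
move=> HE lam0_ge0.
pose a i := ip (Phi (x i)) g; pose S := \sum_i a i ^+ 2.
change (S <= lam 0%N * ip g g).
pose w := \sum_i a i *: Phi (x i).
have wg : ip w g = S.
  by rewrite ip_suml //; apply: eq_bigr => i _; rewrite ipZl // expr2.
have ww : ip w w <= lam 0%N * S.
  apply: le_trans (quad_form_le_top_eig HE a); rewrite le_eqVlt; apply/orP; left.
  rewrite ip_suml //; apply/eqP/eq_bigr => i _.
  rewrite ipZl // ip_sumr // mulr_sumr; apply: eq_bigr => j _.
  by rewrite ipZr // HPhi mxE mulrA.
have S_ge0 : 0 <= S by apply: sumr_ge0 => i _; apply: sqr_ge0.
have S2_le : S ^+ 2 <= S * (lam 0%N * ip g g).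
  rewrite -wg; apply: le_trans (cauchy_schwarz Hip w g) _; rewrite wg.
  by rewrite mulrA ler_wpM2r ?ip_ge0 // mulrC ww.
have [S0|S_neq0] := eqVneq S 0; first by rewrite S0 mulr_ge0 ?ip_ge0.
by move: S2_le; rewrite expr2 ler_pM2l // lt0r S_neq0.
Qed.

End FeatureSpace.

Theorem theorem2 (R : rcfType) (X : Type) (kappa : X -> X -> R)
  (Hk : psd_kernel kappa) (Hk1 : forall x, kappa x x <= 1)
  (V : lmodType R) (ip : V -> V -> R) (Hip : inner_product ip)
  (Phi : X -> V) (HPhi : feature_map kappa ip Phi)
  (N : nat) (x : 'I_N -> X)
  (lam : nat -> R) (Vm : 'M[R]_N)
  (HK : sorted_eigendecomp (gram kappa x x) lam Vm)
  (Hlam : forall i : 'I_N, 0 < lam i)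
  (m : nat) (s : 'I_m -> 'I_N)
  (lamh : nat -> R) (Um : 'M[R]_m)
  (HKh : sorted_eigendecomp (gram kappa (x \o s) (x \o s)) lamh Um)
  (r : nat) (Hr1 : (1 <= r)%N) (Hrm : (r <= m)%N) (HrN : (r <= N)%N)
  (Hlamr : 0 < lam r.-1) (Hlamhr : 0 < lamh r.-1)
  (c : R)
  (Hc : is_op_norm ip
          (fun f => proj_op ip r (eigfun Phi x lam Vm) f
                    - proj_op ip r (eigfun Phi (x \o s) lamh Um) f) c) :
  let Kb := gram kappa x (x \o s) in
  let Khat_r := Kb *m pinv_trunc r lamh Um *m Kb^T in
  let K_r := trunc_mx r lam Vm in
  frob_norm (Khat_r - K_r) <= Num.sqrt (lam 0%N * N%:R) * c
  /\ Num.sqrt (lam 0%N * N%:R) * c <= N%:R * c.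
Proof.
move=> Kb Khat_r K_r.
set DH := fun f => _ - _ in Hc.
have c_ge0 : 0 <= c := op_norm_ge0 Hip Hc.
have N_gt0 : (0 < N)%N := leq_trans Hr1 HrN.
have lam0_ge0 : 0 <= lam 0%N := ltW (Hlam (Ordinal N_gt0)).
have lam0_le_N : lam 0%N <= N%:R.
  by apply: (top_eig_le_dim HK N_gt0) => [k|i]; [exact/ltW/Hlam | rewrite mxE].
(* Both kernel matrices are Gram matrices of the feature vectors under H_r, H^_r. *)
have entry i j : (Khat_r - K_r) i j = - ip (Phi (x i)) (DH (Phi (x j))).
  rewrite [LHS]mxE [X in _ + X]mxE (nystrom_entry Hip HPhi) /K_r.
  - by rewrite (trunc_entry Hip HPhi _ _ HK) /DH ?ipBr ?opprB // => k _; apply: Hlam.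
  - exact: leading_eig_gt0 HKh r Hrm Hlamhr.
(* Each column is bounded via Bessel and ||DH (Phi x_j)|| <= c. *)
have column_bound j : \sum_i (Khat_r - K_r) i j ^+ 2 <= lam 0%N * c ^+ 2.
  under eq_bigr do rewrite entry sqrrN.
  apply: le_trans (feature_bessel Hip HPhi _ HK lam0_ge0) _.
  by rewrite ler_wpM2l // (op_norm_sq_bound Hip Hc) // HPhi.
split.
  apply: frob_norm_le; rewrite ?mulr_ge0 // exchange_big /=.
  apply: le_trans (ler_sum _ (fun j _ => column_bound j)) _.
  by rewrite sumr_const card_ord mulrAC mulr_natr.
rewrite ler_wpM2r //.
have lam0N_le : lam 0%N * N%:R <= N%:R ^+ 2 by rewrite expr2 ler_wpM2r.
by rewrite (le_trans (ler_wsqrtr lam0N_le)) // sqrtr_sqr ger0_norm.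
Qed.
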